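(* Let $R$ be a commutative ring and $I$ a finite totally ordered set. Suppose given, for every subset $I'\subset I$, functions $a_{I'},b_{I'}:\mathcal{D}(I')\to R$ and $c_{I'},d_{I'}:\mathcal{P}_{ord}(I')\to R$ such that for all $P=(I_1,\dots,I_r)\in\mathcal{P}_{ord}(I')$ and $(J,K)\in\mathcal{D}(I')$ for which there exists $k\in\{1,\dots,r\}$ with $J=I_1\cup\dots\cup I_k$, one has $c_{I'}(P)=a_{I'}(J,K)c_J(P\cap J)c_K(P\cap K)$ and $d_{I'}(P)=b_{I'}(J,K)d_J(P\cap J)d_K(P\cap K)$. Let $\lambda=(\lambda_i)_{i\in I}\in\mathbb{R}^I$ and $(I^+,I^-)\in\mathcal{D}(I)$, and let $\lambda^\pm=(\lambda_i)_{i\in I^\pm}$. Then \[\sum_{P\in\mathcal{P}_{ord}(\lambda)}(-1)^{|P|}c_{I^+}(P\cap I^+)d_{I^-}(P\cap I^-)=\sum_{P^+\in\mathcal{P}_{ord}(\lambda^+)}(-1)^{|P^+|}c_{I^+}(P^+)\sum_{P^-\in\mathcal{P}_{ord}(\lambda^-)}(-1)^{|P^-|}d_{I^-}(P^-).\]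
   Context: For a finite set $I$, an ordered partition of $I$ is a finite sequence $P=(I_1,\dots,I_k)$ of nonempty pairwise disjoint subsets with union $I$ (the empty set has exactly one ordered partition, the empty sequence); $\mathcal{P}_{ord}(I)$ is the set of them and $|P|=k$. $\mathcal{D}(I)$ is the set of pairs $(I_1,I_2)$ of disjoint, possibly empty, subsets with $I_1\cup I_2=I$. For $J\subset I$ and $P\in\mathcal{P}_{ord}(I)$, $P\cap J$ is the ordered partition of $J$ obtained by intersecting each $I_i$ with $J$ and deleting empty intersections. For $\lambda\in\mathbb{R}^I$ and $J\subset I$, $s_J(\lambda)=\sum_{i\in J}\lambda_i$. A vector $\mu=(\mu_1,\dots,\mu_k)\in\mathbb{R}^k$ satisfies $\mu>0$ if $\mu_1+\dots+\mu_i>0$ for all $i\in\{1,\dots,k\}$. $\mathcal{P}_{ord}(\lambda)=\{P=(I_1,\dots,I_k)\in\mathcal{P}_{ord}(I):(s_{I_1}(\lambda),\dots,s_{I_k}(\lambda))>0\}$. *)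

From HB Require Import structures.
From mathcomp Require Import all_boot all_order all_algebra.
From mathcomp Require Import reals.
Set Implicit Arguments. Unset Strict Implicit. Unset Printing Implicit Defensive.
Import Order.TTheory GRing.Theory Num.Theory.
Local Open Scope ring_scope.

Section OrdPart.
Variable T : finType.

Definition is_opart (A : {set T}) (P : seq {set T}) : bool :=
  [&& all (fun B => B != set0) P,
      pairwise (fun B C : {set T} => [disjoint B & C]) P &
      \bigcup_(B <- P) B == A].

Definition opart_restr (P : seq {set T}) (J : {set T}) : seq {set T} :=
  [seq B <- [seq B :&: J | B <- P] | B != set0].

Definition initial_union (P : seq {set T}) (J : {set T}) : Prop :=
  exists2 k : nat, (0 < k <= size P)%N & J = \bigcup_(B <- take k P) B.

Variable Re : realType.

Definition sJ (lam : T -> Re) (J : {set T}) : Re := \sum_(i in J) lam i.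

Definition opart_pos (lam : T -> Re) (P : seq {set T}) : bool :=
  [forall i : 'I_(size P), 0 < \sum_(B <- take i.+1 P) sJ lam B].

Definition in_Pord (lam : T -> Re) (A : {set T}) (P : seq {set T}) : bool :=
  is_opart A P && opart_pos lam P.

(* Sum over all P in P_ord(lam|_A).  Every ordered partition of a subset of T
   has length <= #|T|, so enumerating tuples of each length k <= #|T|
   lists every ordered partition exactly once. *)
Definition sum_Pord (R : nmodType) (lam : T -> Re) (A : {set T})
    (F : seq {set T} -> R) : R :=
  \sum_(k < #|T|.+1) \sum_(t : k.-tuple {set T} | in_Pord lam A t) F t.

End OrdPart.

From HB Require Import structures.
From mathcomp Require Import all_boot all_order all_algebra.
From mathcomp Require Import reals.
From mathcomp Require Import zify ring lra.
Set Implicit Arguments. Unset Strict Implicit. Unset Printing Implicit Defensive.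
Import Order.TTheory GRing.Theory Num.Theory.
Local Open Scope ring_scope.

(* Group the ordered partitions P of I by the pair (P \cap I^+, P \cap I^-) =
   (Q, S).  The fibre over (Q, S) consists of the quasi-shuffles of Q and S, and
   the signed number of positive ones is sgn(Q) sgn(S), where sgn(Q) = (-1)^|Q|
   if Q is positive and 0 otherwise.  Since positivity constrains prefix sums,
   this is proved by peeling off the last block, which is the last block of Q,
   that of S, or their union.  If Q and S partition A and B, and a = s_A(lam),
   b = s_B(lam), the induction step is the identity
     [a + b > 0] ([a > 0] + [b > 0] - 1) = [a > 0] [b > 0]. *)

Ltac set_tauto :=
  let i := fresh "i" in
  apply/setP => i;
  repeat match goal with
  | H : _ = _ |- _ => move: H => /setP /(_ i) /eqP
  | H : is_true (_ \subset _) |- _ => move: H => /subsetP /(_ i) /implyP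
  end;
  rewrite !inE;
  repeat match goal with |- context [in_mem ?x ?A] => case: (in_mem x A) end;
  by [].

Lemma partition_big_seq (M : nmodType) (I J : eqType) (s : seq I) (t : seq J)
    (P : pred I) (p : I -> J) (Q : pred J) (F : I -> M) :
  uniq t -> (forall i, P i -> (p i \in t) && Q (p i)) ->
  \sum_(i <- s | P i) F i = \sum_(j <- t | Q j) \sum_(i <- s | P i && (p i == j)) F i.
Proof.
move=> t_uniq Pp; under [RHS]eq_bigr do rewrite big_mkcondr.
rewrite exchange_big /=; apply: eq_bigr => i /Pp /andP[pit Qpi].
rewrite -big_mkcondr -big_filter (@eq_filter _ _ (pred1 (p i))).
  by rewrite filter_pred1_uniq // big_seq1.
by move=> j /=; rewrite eq_sym; case: eqP => [->|]; rewrite ?Qpi ?andbF.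
Qed.

Section OrderedPartitions.
Variable T : finType.
Implicit Types (A B D X q s x y z : {set T}) (P Q S : seq {set T}).

Lemma disjoint_bigcup x P :
  [disjoint x & \bigcup_(C <- P) C] = all (fun C : {set T} => [disjoint x & C]) P.
Proof.
elim: P => [|C P IH]; first by rewrite big_nil -setI_eq0 setI0 eqxx.
by rewrite big_cons /= -IH -!setI_eq0 setIUr setU_eq0.
Qed.

Lemma opart_nil A : is_opart A [::] = (A == set0).
Proof. by rewrite /is_opart /= big_nil eq_sym. Qed.

Lemma opart_cons A x P :
  is_opart A (x :: P) = [&& x != set0, x \subset A & is_opart (A :\: x) P].
Proof.
rewrite /is_opart /= big_cons -disjoint_bigcup -setI_eq0.
set U := \bigcup_(C <- P) C.
have key : (x :&: U == set0) && (x :|: U == A) = (x \subset A) && (U == A :\: x).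
  apply/andP/andP => [[/eqP xU /eqP xUA]|[xA /eqP UA]]; split.
  - by rewrite -xUA subsetUl.
  - by apply/eqP; set_tauto.
  - by apply/eqP; set_tauto.
  - by apply/eqP; set_tauto.
by case: (all _ P) (pairwise _ P) => [] []; rewrite /= ?andbT ?andbF ?key.
Qed.

Lemma opart_rev A P : is_opart A (rev P) = is_opart A P.
Proof.
have pairwise_rev Q : pairwise (fun B C : {set T} => [disjoint B & C]) (rev Q) =
    pairwise (fun B C : {set T} => [disjoint B & C]) Q.
  elim: Q => //= C Q IH; rewrite rev_cons pairwise_rcons IH all_rev.
  by congr (_ && _); apply: eq_all => B; rewrite disjoint_sym.
by rewrite /is_opart all_rev pairwise_rev big_rev.
Qed.

Lemma opart_size A P : is_opart A P -> (size P <= #|A|)%N.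
Proof.
elim: P A => [|x P IH] A //; rewrite opart_cons => /and3P[x0 xA /IH].
rewrite -card_gt0 in x0; rewrite (cardsDS xA) /=; have := subset_leq_card xA; lia.
Qed.

Lemma opart_restr_cons P x X : opart_restr (x :: P) X =
  if x :&: X != set0 then x :&: X :: opart_restr P X else opart_restr P X.
Proof. by []. Qed.

Lemma opart_restr_rev P X : opart_restr (rev P) X = rev (opart_restr P X).
Proof. by rewrite /opart_restr map_rev filter_rev. Qed.

Lemma opart_restr0 P : opart_restr P set0 = [::].
Proof. by elim: P => //= x P; rewrite opart_restr_cons setI0 eqxx. Qed.

Lemma opart_restrD D P x X :
  is_opart (D :\: x) P -> opart_restr P (X :\: x) = opart_restr P X.
Proof.
elim: P D => [|y P IH] D //; rewrite opart_cons => /and3P[_ yD HP].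
rewrite !opart_restr_cons (IH (D :\: y)); last by rewrite setDDl setUC -setDDl.
by have -> : y :&: (X :\: x) = y :&: X by set_tauto.
Qed.

Lemma opart_restr_id A P : is_opart A P -> opart_restr P A = P.
Proof.
elim: P A => [|x P IH] A //; rewrite opart_cons => /and3P[x0 xA HP].
by rewrite opart_restr_cons (setIidPl xA) x0 -(opart_restrD A HP) (IH _ HP).
Qed.

Lemma opart_restr_opart D A P :
  is_opart D P -> A \subset D -> is_opart A (opart_restr P A).
Proof.
elim: P D A => [|x P IH] D A.
  by rewrite opart_nil => /eqP ->; rewrite subset0 opart_nil.
rewrite opart_cons => /and3P[_ _ HP] AD.
have AxD : A :\: x \subset D :\: x by apply: setSD.
rewrite opart_restr_cons -(opart_restrD _ HP); case: ifP => [xA0|/negbFE/eqP xA0].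
  rewrite opart_cons xA0 subsetIr.
  have -> : A :\: (x :&: A) = A :\: x by set_tauto.
  exact: IH HP AxD.
have AxA : A :\: x = A by set_tauto.
by rewrite -{1}AxA; apply: IH HP AxD.
Qed.

Fixpoint qshuffle Q S {struct Q} : seq (seq {set T}) :=
  if Q is q :: Q' then
    let fix qshuffle_q S :=
      if S is s :: S' then
        [seq q :: P | P <- qshuffle Q' S] ++ [seq s :: P | P <- qshuffle_q S'] ++
        [seq q :|: s :: P | P <- qshuffle Q' S']
      else [:: Q] in
    qshuffle_q S
  else [:: S].

Arguments qshuffle : simpl never.

Lemma qshuffle0s S : qshuffle [::] S = [:: S].
Proof. by []. Qed.

Lemma qshuffles0 Q : qshuffle Q [::] = [:: Q].
Proof. by case: Q. Qed.

Lemma qshuffle_cons q Q s S : qshuffle (q :: Q) (s :: S) =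
  [seq q :: P | P <- qshuffle Q (s :: S)] ++ [seq s :: P | P <- qshuffle (q :: Q) S] ++
  [seq q :|: s :: P | P <- qshuffle Q S].
Proof. by []. Qed.

Lemma mem_map_cons y x P (L : seq (seq {set T})) :
  (x :: P \in [seq y :: R | R <- L]) = (x == y) && (P \in L).
Proof. by apply/mapP/andP => [[R RL [-> ->]]|[/eqP -> PL]]; [|exists P]. Qed.

Definition is_qshuffle A B Q S P :=
  [&& is_opart (A :|: B) P, opart_restr P A == Q & opart_restr P B == S].

Lemma is_qshuffle_rev A B Q S P :
  is_qshuffle A B (rev Q) (rev S) (rev P) = is_qshuffle A B Q S P.
Proof. by rewrite /is_qshuffle opart_rev !opart_restr_rev !(inj_eq (can_inj revK)). Qed.

Definition ocons x P := if x != set0 then x :: P else P.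

Lemma is_qshuffle_ocons A B Q S y z P :
  A :&: B = set0 -> y \subset A -> z \subset B -> y :|: z != set0 ->
  is_qshuffle A B (ocons y Q) (ocons z S) (y :|: z :: P) =
  is_qshuffle (A :\: y) (B :\: z) Q S P.
Proof.
move=> AB yA zB yz0; rewrite /is_qshuffle opart_cons !opart_restr_cons yz0.
have -> : (y :|: z) :&: A = y by set_tauto.
have -> : (y :|: z) :&: B = z by set_tauto.
have -> : (A :\: y) :|: (B :\: z) = (A :|: B) :\: (y :|: z) by set_tauto.
rewrite setUSS //=; case HP: (is_opart _ P) => //=.
have -> : opart_restr P (A :\: y) = opart_restr P A.
  by rewrite -(opart_restrD A HP); congr opart_restr; set_tauto.
have -> : opart_restr P (B :\: z) = opart_restr P B.
  by rewrite -(opart_restrD B HP); congr opart_restr; set_tauto.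
by rewrite /ocons; case: (y != set0); case: (z != set0); rewrite ?eqseq_cons ?eqxx.
Qed.

Lemma is_qshuffle_consl A B Q S q P : A :&: B = set0 -> q \subset A -> q != set0 ->
  is_qshuffle A B (q :: Q) S (q :: P) = is_qshuffle (A :\: q) B Q S P.
Proof.
move=> AB qA q0; have := is_qshuffle_ocons Q S P AB qA (sub0set B).
by rewrite /ocons q0 eqxx setU0 setD0 => ->.
Qed.

Lemma is_qshuffle_consr A B Q S s P : A :&: B = set0 -> s \subset B -> s != set0 ->
  is_qshuffle A B Q (s :: S) (s :: P) = is_qshuffle A (B :\: s) Q S P.
Proof.
move=> AB sB s0; have := is_qshuffle_ocons Q S P AB (sub0set A) sB.
by rewrite /ocons s0 eqxx set0U setD0 => ->.
Qed.

Lemma is_qshuffle_consU A B Q S q s P :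
  A :&: B = set0 -> q \subset A -> s \subset B -> q != set0 -> s != set0 ->
  is_qshuffle A B (q :: Q) (s :: S) (q :|: s :: P) = is_qshuffle (A :\: q) (B :\: s) Q S P.
Proof.
move=> AB qA sB q0 s0; have := is_qshuffle_ocons Q S P AB qA sB.
by rewrite /ocons q0 s0 setU_eq0 negb_and q0 => ->.
Qed.

Lemma is_qshuffle0s B S P : is_opart B S -> is_qshuffle set0 B [::] S P = (P == S).
Proof.
move=> HS; rewrite /is_qshuffle set0U opart_restr0 eqxx /=.
by apply/andP/eqP => [[HP /eqP <-]|->]; rewrite opart_restr_id.
Qed.

Lemma is_qshuffles0 A Q P : is_opart A Q -> is_qshuffle A set0 Q [::] P = (P == Q).
Proof.
move=> HQ; rewrite /is_qshuffle setU0 opart_restr0 eqxx andbT.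
by apply/andP/eqP => [[HP /eqP <-]|->]; rewrite opart_restr_id.
Qed.

Lemma qshuffle_sound A B Q S P : A :&: B = set0 -> is_opart A Q -> is_opart B S ->
  P \in qshuffle Q S -> is_qshuffle A B Q S P.
Proof.
elim: Q A S B P => [|q Q IHQ] A S B P AB.
  by rewrite opart_nil => /eqP -> HS; rewrite qshuffle0s inE is_qshuffle0s.
elim: S B P AB => [|s S IHS] B P AB HQ.
  by rewrite opart_nil => /eqP ->; rewrite qshuffles0 inE is_qshuffles0.
move=> HS; move: (HQ) (HS); rewrite !opart_cons => /and3P[q0 qA HQ'] /and3P[s0 sB HS'].
rewrite qshuffle_cons !mem_cat => /or3P[] /mapP[R HR ->].
- rewrite is_qshuffle_consl //; apply: IHQ HQ' HS HR; set_tauto.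
- rewrite is_qshuffle_consr //; apply: IHS HQ HS' HR; set_tauto.
- rewrite is_qshuffle_consU //; apply: IHQ HQ' HS' HR; set_tauto.
Qed.

Lemma qshuffle_ocons y z Q S P : y :|: z != set0 ->
  P \in qshuffle Q S -> y :|: z :: P \in qshuffle (ocons y Q) (ocons z S).
Proof.
rewrite /ocons setU_eq0 negb_and.
case: (eqVneq y set0) => [->|y0]; case: (eqVneq z set0) => [->|z0] //= _.
- rewrite set0U; case: Q => [|q Q]; first by rewrite !qshuffle0s !inE => /eqP ->.
  by move=> HP; rewrite qshuffle_cons !mem_cat !mem_map_cons eqxx HP orbT.
- rewrite setU0; case: S => [|s S]; first by rewrite !qshuffles0 !inE => /eqP ->.
  by move=> HP; rewrite qshuffle_cons !mem_cat !mem_map_cons eqxx HP.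
- by move=> HP; rewrite qshuffle_cons !mem_cat !mem_map_cons eqxx HP !orbT.
Qed.

Lemma qshuffle_complete A B Q S P :
  A :&: B = set0 -> is_qshuffle A B Q S P -> P \in qshuffle Q S.
Proof.
elim: P A B Q S => [|x P IH] A B Q S AB.
  by case/and3P => _ /eqP <- /eqP <-; rewrite qshuffle0s inE.
case/and3P => HxP /eqP <- /eqP <-; move: (HxP); rewrite opart_cons => /and3P[x0 xAB HP].
have xE : x = x :&: A :|: x :&: B by set_tauto.
rewrite !opart_restr_cons -/(ocons (x :&: A) _) -/(ocons (x :&: B) _) {1}xE.
apply: qshuffle_ocons; first by rewrite -xE.
apply: (IH (A :\: (x :&: A)) (B :\: (x :&: B))); first by set_tauto.
rewrite -is_qshuffle_ocons ?subsetIr -?xE //.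
by rewrite /is_qshuffle HxP !eqxx.
Qed.

Lemma qshuffle_uniq A B Q S : A :&: B = set0 -> is_opart A Q -> is_opart B S ->
  uniq (qshuffle Q S).
Proof.
elim: Q A S B => [|q Q IHQ] A S B AB; first by rewrite qshuffle0s.
elim: S B AB => [|s S IHS] B AB HQ; first by rewrite qshuffles0.
move=> HS; move: (HQ) (HS); rewrite !opart_cons => /and3P[q0 qA HQ'] /and3P[s0 sB HS'].
have heads_differ y y' (L L' : seq (seq {set T})) : y != y' ->
    ~~ has (mem [seq y :: R | R <- L]) [seq y' :: R | R <- L'].
  by move=> yy'; apply/hasPn => _ /mapP[R _ ->]; rewrite /= mem_map_cons eq_sym (negbTE yy').
have qs : q != s by apply: contraNneq q0 => qs; apply/eqP; set_tauto.
have qqs : q != q :|: s by apply: contraNneq s0 => qqs; apply/eqP; set_tauto.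
have sqs : s != q :|: s by apply: contraNneq q0 => sqs; apply/eqP; set_tauto.
rewrite qshuffle_cons !cat_uniq has_cat negb_or !heads_differ //.
rewrite !map_inj_uniq; try by move=> R R' [].
by rewrite (IHQ (A :\: q) _ B) ?(IHS (B :\: s)) ?(IHQ (A :\: q) _ (B :\: s)) //; set_tauto.
Qed.

End OrderedPartitions.

Section BoundedSequences.
Variable T : finType.

Definition seqs_upto N : seq (seq {set T}) :=
  [seq tval t | k <- iota 0 N.+1, t <- enum {: k.-tuple {set T}}].

Lemma mem_seqs_upto N P : (P \in seqs_upto N) = (size P <= N)%N.
Proof.
apply/allpairsPdep/idP => [[k [t [kN _ ->]]]|PN].
  by rewrite size_tuple -ltnS; rewrite mem_iota in kN.
by exists (size P), (in_tuple P); rewrite mem_iota mem_enum.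
Qed.

Lemma seqs_upto_uniq N : uniq (seqs_upto N).
Proof.
apply: allpairs_uniq_dep => [|k _|[k t] [k' t'] _ _ /= tt']; rewrite ?iota_uniq ?enum_uniq //.
have kk' : k = k' by rewrite -(size_tuple t) -(size_tuple t') tt'.
by case: k' / kk' t' tt' => t' /val_inj ->.
Qed.

Lemma sum_Pord_seqs (M : nmodType) (Re : realType) (lam : T -> Re) A (F : seq {set T} -> M) :
  sum_Pord lam A F = \sum_(P <- seqs_upto #|T| | in_Pord lam A P) F P.
Proof.
rewrite /sum_Pord [RHS]big_mkcond big_allpairs_dep.
have -> : iota 0 #|T|.+1 = index_iota 0 #|T|.+1 by rewrite /index_iota subn0.
rewrite big_mkord; apply: eq_bigr => k _; rewrite -big_mkcond big_enum_cond.
by apply: eq_bigl => t; rewrite inE.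
Qed.

End BoundedSequences.

Section Signs.
Variables (T : finType) (Re : realType) (lam : T -> Re) (R : comPzRingType).
Implicit Types (A B x : {set T}) (P Q S : seq {set T}).

Lemma sJU A B : A :&: B = set0 -> sJ lam (A :|: B) = sJ lam A + sJ lam B.
Proof.
move=> AB; rewrite /sJ -bigU; last by rewrite -setI_eq0 AB.
by apply: eq_bigl => i; rewrite !inE.
Qed.

Lemma sJ_opart A P : is_opart A P -> \sum_(C <- P) sJ lam C = sJ lam A.
Proof.
elim: P A => [|x P IH] A; first by rewrite opart_nil => /eqP ->; rewrite big_nil /sJ big_set0.
rewrite opart_cons big_cons => /and3P[_ xA /IH ->].
by rewrite -sJU; [congr (sJ lam _) | ]; set_tauto.
Qed.

Lemma opart_posE P : opart_pos lam P =
  all (fun k => 0 < \sum_(C <- take k.+1 P) sJ lam C) (iota 0 (size P)).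
Proof.
apply/forallP/allP => [pos k|pos i]; last by apply: pos; rewrite mem_iota ltn_ord.
by rewrite mem_iota => /andP[_ kP]; apply: (pos (Ordinal kP)).
Qed.

Lemma opart_pos_rcons P x : opart_pos lam (rcons P x) =
  (0 < \sum_(C <- rcons P x) sJ lam C) && opart_pos lam P.
Proof.
rewrite !opart_posE size_rcons -addn1 iotaD all_cat /= andbT andbC add0n.
rewrite take_oversize ?size_rcons //; congr andb; apply: eq_in_all => k.
by rewrite mem_iota /= => kP; rewrite -cats1 takel_cat.
Qed.

Definition opart_sign P : R := if opart_pos lam P then (-1) ^+ size P else 0.

Lemma opart_sign_nil : opart_sign [::] = 1.
Proof. by rewrite /opart_sign opart_posE. Qed.

Lemma opart_sign_rcons A P x : is_opart A (rcons P x) ->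
  opart_sign (rcons P x) = - (0 < sJ lam A)%R%:R * opart_sign P.
Proof.
move=> HPx; rewrite /opart_sign opart_pos_rcons (sJ_opart HPx) size_rcons exprS.
by case: (0 < sJ lam A); case: (opart_pos lam P);
  rewrite /= ?mulN1r ?mulNr ?mul1r ?mul0r ?mulr0 ?oppr0.
Qed.

Lemma opart_sign_rev_cons A x P : is_opart A (x :: P) ->
  opart_sign (rev (x :: P)) = - (0 < sJ lam A)%R%:R * opart_sign (rev P).
Proof. by rewrite -opart_rev rev_cons; apply: opart_sign_rcons. Qed.

Lemma pos_indicator_add (a b : Re) :
  (0 < a + b)%R%:R * ((0 < a)%R%:R + (0 < b)%R%:R - 1) = (0 < a)%R%:R * (0 < b)%R%:R :> R.
Proof.
case: (ltrP 0 a) => a0; case: (ltrP 0 b) => b0 /=.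
- by rewrite addr_gt0 //= addrK.
- by rewrite addr0 subrr !mulr0.
- by rewrite add0r subrr mulr0 mul0r.
- by rewrite ltNge (_ : a + b <= 0) ?mul0r //; lra.
Qed.

(* Quasi-shuffles are taken on reversed sequences, so that the block peeled off
   by the recursion is the last one. *)
Lemma qshuffle_sign_sum A B Q S : A :&: B = set0 -> is_opart A Q -> is_opart B S ->
  \sum_(P <- qshuffle Q S) opart_sign (rev P) = opart_sign (rev Q) * opart_sign (rev S).
Proof.
elim: Q A S B => [|q Q IHQ] A S B AB.
  by move=> _ _; rewrite qshuffle0s big_seq1 opart_sign_nil mul1r.
elim: S B AB => [|s S IHS] B AB HQ.
  by move=> _; rewrite qshuffles0 big_seq1 opart_sign_nil mulr1.
move=> HS; move: (HQ) (HS); rewrite !opart_cons => /and3P[q0 qA HQ'] /and3P[s0 sB HS'].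
set W : R := (0 < sJ lam (A :|: B))%R%:R.
have sum_cons y L : {subset [seq y :: P | P <- L] <= qshuffle (q :: Q) (s :: S)} ->
    \sum_(P <- [seq y :: P | P <- L]) opart_sign (rev P) =
    - W * \sum_(P <- L) opart_sign (rev P).
  move=> Lsub; rewrite big_map mulr_sumr big_seq [RHS]big_seq; apply: eq_bigr => P PL.
  apply: (opart_sign_rev_cons (A := A :|: B)).
  by have /and3P[] := qshuffle_sound AB HQ HS (Lsub _ (map_f _ PL)).
rewrite qshuffle_cons !big_cat /= !sum_cons;
  try by move=> P PL; rewrite qshuffle_cons !mem_cat PL ?orbT.
rewrite (IHQ (A :\: q) _ B) ?(IHS (B :\: s)) ?(IHQ (A :\: q) _ (B :\: s)) //; try set_tauto.
rewrite (opart_sign_rev_cons HQ) (opart_sign_rev_cons HS) /W sJU //.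
set gQ := opart_sign (rev Q); set gS := opart_sign (rev S).
transitivity ((0 < sJ lam A + sJ lam B)%R%:R *
  ((0 < sJ lam A)%R%:R + (0 < sJ lam B)%R%:R - 1) * (gQ * gS) : R); first by ring.
by rewrite pos_indicator_add; ring.
Qed.

Lemma sum_in_Pord_sign (s : seq (seq {set T})) A (F : seq {set T} -> R) :
  \sum_(P <- s | in_Pord lam A P) (-1) ^+ size P * F P =
  \sum_(P <- s | is_opart A P) opart_sign P * F P.
Proof.
rewrite /in_Pord big_mkcondr; apply: eq_bigr => P _.
by rewrite /opart_sign; case: ifP; rewrite ?mul0r.
Qed.

Lemma sum_qshuffle_sign N A B Q S :
  A :&: B = set0 -> is_opart A Q -> is_opart B S -> (#|A :|: B| <= N)%N ->
  \sum_(P <- seqs_upto T N | is_qshuffle A B Q S P) opart_sign P =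
  opart_sign Q * opart_sign S.
Proof.
move=> AB HQ HS ABN; rewrite -(opart_rev A) in HQ; rewrite -(opart_rev B) in HS.
have fiberE : perm_eq [seq P <- seqs_upto T N | is_qshuffle A B Q S P]
                      [seq rev P | P <- qshuffle (rev Q) (rev S)].
  apply: uniq_perm; first exact/filter_uniq/seqs_upto_uniq.
    by rewrite (map_inj_uniq (can_inj revK)) (qshuffle_uniq AB HQ HS).
  move=> P; rewrite mem_filter mem_seqs_upto -[in RHS](revK P) (mem_map (can_inj revK)).
  apply/andP/idP => [[HP _]|HrP]; first by apply: qshuffle_complete AB _; rewrite is_qshuffle_rev.
  have := qshuffle_sound AB HQ HS HrP; rewrite is_qshuffle_rev => HP; split => //.
  by case/and3P: HP => /opart_size sizeP _ _; apply: leq_trans sizeP ABN.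
by rewrite -big_filter (perm_big _ fiberE) big_map (qshuffle_sign_sum AB HQ HS) !revK.
Qed.

End Signs.

Theorem proposition7p1 (disp : Order.disp_t) (I : finOrderType disp)
  (R : comPzRingType) (Re : realType)
  (a b : {set I} -> {set I} -> {set I} -> R)
  (c d : {set I} -> seq {set I} -> R)
  (Hc : forall (I' J K : {set I}) (P : seq {set I}),
      is_opart I' P -> J :&: K = set0 -> J :|: K = I' -> initial_union P J ->
      c I' P = a I' J K * c J (opart_restr P J) * c K (opart_restr P K))
  (Hd : forall (I' J K : {set I}) (P : seq {set I}),
      is_opart I' P -> J :&: K = set0 -> J :|: K = I' -> initial_union P J ->
      d I' P = b I' J K * d J (opart_restr P J) * d K (opart_restr P K))
  (lam : I -> Re) (Ip Im : {set I})
  (HD : Ip :&: Im = set0) (HU : Ip :|: Im = [set: I]) :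
  sum_Pord lam [set: I]
    (fun P => (-1) ^+ size P * c Ip (opart_restr P Ip) * d Im (opart_restr P Im))
  = sum_Pord lam Ip (fun P => (-1) ^+ size P * c Ip P)
    * sum_Pord lam Im (fun P => (-1) ^+ size P * d Im P).
Proof.
have restr_ok X P : is_opart [set: I] P ->
    (opart_restr P X \in seqs_upto I #|I|) && is_opart X (opart_restr P X).
  move=> HP; have HX := opart_restr_opart HP (subsetT X).
  by rewrite HX mem_seqs_upto andbT (leq_trans (opart_size HX)) ?max_card.
rewrite !sum_Pord_seqs; under eq_bigr do rewrite -mulrA.
rewrite !sum_in_Pord_sign (partition_big_seq _ _ (seqs_upto_uniq _ _) (restr_ok Ip)).
rewrite big_distrl; apply: eq_bigr => Q HQ.
rewrite (@partition_big_seq _ _ _ _ (seqs_upto I #|I|) _ (fun P => opart_restr P Im) (is_opart Im));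
  [|exact: seqs_upto_uniq | by move=> P /andP[/restr_ok]].
rewrite big_distrr; apply: eq_bigr => S HS /=.
transitivity (c Ip Q * d Im S *
  \sum_(P <- seqs_upto I #|I| | is_qshuffle Ip Im Q S P) opart_sign lam R P).
  rewrite mulr_sumr; apply: eq_big => [P|P /andP[/andP[_ /eqP ->] /eqP ->]].
    by rewrite /is_qshuffle HU andbA.
  exact: mulrC.
rewrite (sum_qshuffle_sign _ _ HD HQ HS); last by rewrite HU max_card.
ring.
Qed.
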